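(* Let $G=A*_C B$ with $|C\backslash A/C|\ge 3$ and $|B/C|\ge 2$, with generating set $S=(A\cup B)\setminus\{1\}$. Then there exist words $w_i$ ($i=0,1,2,\dots$) in $S$ such that: (1) for every $i\ge0$ and $n\ge1$, $h_{w_i}(\overline{w_i^n})=n$; (2) for every $j>i\ge 0$ and $n\ge 1$, $h_{w_j}(\overline{w_i^n})=0$; (3) for every $i\ge 0$, $\overline{w_i}\in[G,G]$.
   Context: $G=A*_C B$ is an amalgamated free product ($C$ a common subgroup of $A$, $B$); $|C\backslash A/C|$ is the number of double cosets. Words are finite sequences of letters in $S$; $\bar u$ is the element represented, $|u|$ the length, $u^{-1}$ the formal inverse word, and $|g|$ the word length of $g\in G$. For a nonempty word $w$ and a word $u$, $|u|_w$ is the maximal number of pairwise non-overlapping occurrences of $w$ as a contiguous subword of $u$. For $g\in G$, $c_w(g)=|g|-\min\{|u|-|u|_w : \bar u=g\}$ and $h_w(g)=c_w(g)-c_{w^{-1}}(g)$. *)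

From Stdlib Require Import List Arith ZArith ClassicalEpsilon.
Import ListNotations.

Record Group := {
  carrier :> Type;
  gmul : carrier -> carrier -> carrier;
  gone : carrier;
  ginv : carrier -> carrier;
  gmulA : forall x y z, gmul x (gmul y z) = gmul (gmul x y) z;
  gmul1g : forall x, gmul gone x = x;
  gmulVg : forall x, gmul (ginv x) x = gone
}.

Arguments gmul {g}.
Arguments gone {g}.
Arguments ginv {g}.

Section GroupDefs.
Variable G : Group.

Definition is_subgroup (P : G -> Prop) : Prop :=
  P gone /\ (forall x y, P x -> P y -> P (gmul x y)) /\ (forall x, P x -> P (ginv x)).

Definition commutator (a b : G) : G := gmul (gmul (ginv a) (ginv b)) (gmul a b).

Inductive in_derived : G -> Prop :=
| der_one : in_derived gone
| der_comm : forall a b, in_derived (commutator a b)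
| der_mul : forall x y, in_derived x -> in_derived y -> in_derived (gmul x y)
| der_inv : forall x, in_derived x -> in_derived (ginv x).

Definition same_dcoset (C : G -> Prop) (x y : G) : Prop :=
  exists c1 c2, C c1 /\ C c2 /\ y = gmul (gmul c1 x) c2.

Definition at_least_3_double_cosets (C A : G -> Prop) : Prop :=
  exists a1 a2 a3, A a1 /\ A a2 /\ A a3 /\
    ~ same_dcoset C a1 a2 /\ ~ same_dcoset C a1 a3 /\ ~ same_dcoset C a2 a3.

Definition same_lcoset (C : G -> Prop) (x y : G) : Prop :=
  exists c, C c /\ y = gmul x c.

Definition at_least_2_left_cosets (B C : G -> Prop) : Prop :=
  exists b1 b2, B b1 /\ B b2 /\ ~ same_lcoset C b1 b2.
End GroupDefs.

Definition hom_on (G H : Group) (P : G -> Prop) (f : G -> H) : Prop :=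
  forall x y, P x -> P y -> f (gmul x y) = gmul (f x) (f y).

Definition is_hom (G H : Group) (f : G -> H) : Prop :=
  forall x y, f (gmul x y) = gmul (f x) (f y).

(* G is the (internal) amalgamated free product A *_C B of its subgroups A
   and B over C = A ∩ B: universal property of the pushout. *)
Definition is_amalgam (G : Group) (A B : G -> Prop) : Prop :=
  is_subgroup G A /\ is_subgroup G B /\
  forall (H : Group) (f1 f2 : G -> H),
    hom_on G H A f1 -> hom_on G H B f2 ->
    (forall c, A c -> B c -> f1 c = f2 c) ->
    (exists F : G -> H, is_hom G H F /\
        (forall a, A a -> F a = f1 a) /\ (forall b, B b -> F b = f2 b)) /\
    (forall F1 F2 : G -> H, is_hom G H F1 -> is_hom G H F2 ->
        (forall a, A a -> F1 a = f1 a) -> (forall b, B b -> F1 b = f2 b) ->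
        (forall a, A a -> F2 a = f1 a) -> (forall b, B b -> F2 b = f2 b) ->
        forall g, F1 g = F2 g).

(* least / greatest natural number satisfying P (meaningful when it exists) *)
Definition natmin (P : nat -> Prop) : nat :=
  epsilon (inhabits 0) (fun m => P m /\ forall k, P k -> m <= k).
Definition natmax (P : nat -> Prop) : nat :=
  epsilon (inhabits 0) (fun m => P m /\ forall k, P k -> k <= m).

Fixpoint has_occ {T : Type} (w u : list T) (k : nat) : Prop :=
  match k with
  | 0 => True
  | S k' => exists x y, u = x ++ w ++ y /\ has_occ w y k'
  end.

Definition occ {T : Type} (w u : list T) : nat := natmax (fun k => has_occ w u k).

Section Words.
Variables (G : Group) (A B : G -> Prop).

Definition gen_S (g : G) : Prop := (A g \/ B g) /\ g <> gone.

Definition is_word (u : list G) : Prop := Forall gen_S u.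

Definition eval (u : list G) : G := fold_right gmul gone u.

Definition winv (u : list G) : list G := rev (map ginv u).

Definition wpow (u : list G) (n : nat) : list G := concat (repeat u n).

Definition wlen (g : G) : nat :=
  natmin (fun m => exists u, is_word u /\ eval u = g /\ length u = m).

Definition c_w (w : list G) (g : G) : Z :=
  (Z.of_nat (wlen g) -
   Z.of_nat (natmin (fun m => exists u, is_word u /\ eval u = g /\
                                        m = (length u - occ w u)%nat)))%Z.

Definition h_w (w : list G) (g : G) : Z := (c_w w g - c_w (winv w) g)%Z.
End Words.

(* Fix p, q in A \ C and b in B \ C, and let w_k be the product of the commutator
   blocks x b x^-1 b^-1 with x running through p^k q q p q; the w_i are the w_(i+2).

   The universal property of the amalgam gives an action of G on normal forms modulo C.
   Parse the normal form of g into single entries of cost 1 and copies of v (entrywise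
   up to double cosets C x C) of cost |v| - 1: multiplying by a letter raises the
   cheapest cost by at most 1 and multiplying by a copy of v by at most |v| - 1, so this
   cost is a lower bound for min { |u| - |u|_v : u = g }. The normal form of w_k^n is
   w_k^n itself up to double cosets, whose cost for v = w_k is n (|w_k| - 1). Choosing p
   and q so that the double cosets of p^-1 and q^-1 are split between those of p and q,
   and colouring letters accordingly, the runs of p-blocks in w_k^-1 and in w_(k')^(+-1)
   (k' > k) are too long or wrongly placed to occur in the periodic word w_k^n, so these
   words cannot be parsed in it. *)

From Stdlib Require Import List Arith ZArith Lia Classical ClassicalEpsilon
  FunctionalExtensionality PropExtensionality ProofIrrelevance.
Import ListNotations.

Lemma natmin_spec (P : nat -> Prop) :
  (exists m, P m) -> P (natmin P) /\ forall k, P k -> natmin P <= k.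
Proof.
  intros [m Hm]. unfold natmin.
  apply (epsilon_spec (inhabits 0) (fun m => P m /\ forall k, P k -> m <= k)).
  induction m as [m IH] using lt_wf_ind.
  destruct (classic (exists k, P k /\ k < m)) as [[k [Hk Hlt]]|Hno].
  - exact (IH k Hlt Hk).
  - exists m. split; auto. intros k Hk.
    destruct (le_lt_dec m k); auto. exfalso; eauto.
Qed.

Lemma natmax_spec (P : nat -> Prop) :
  (exists m, P m) -> (exists b, forall k, P k -> k <= b) ->
  P (natmax P) /\ forall k, P k -> k <= natmax P.
Proof.
  intros [m Hm] [b Hb]. unfold natmax.
  apply (epsilon_spec (inhabits 0) (fun m => P m /\ forall k, P k -> k <= m)).
  enough (Hd : forall d m, P m -> b - m <= d -> exists M, P M /\ forall k, P k -> k <= M)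
    by exact (Hd _ m Hm (le_n _)).
  induction d as [|d IH]; intros m' Hm' Hd.
  - exists m'. split; auto. intros k Hk. specialize (Hb k Hk). lia.
  - destruct (classic (exists k, P k /\ m' < k)) as [[k [Hk Hlt]]|Hno].
    + apply (IH k Hk). specialize (Hb k Hk). lia.
    + exists m'. split; auto. intros k Hk.
      destruct (le_lt_dec k m'); auto. exfalso; eauto.
Qed.

(** * Words in six abstract letters *)

(* [Lp], [LP], [Lq], [LQ], [Lb], [LB] stand for p, p^-1, q, q^-1, b, b^-1. *)
Inductive letter := Lp | LP | Lq | LQ | Lb | LB.

Definition letter_inv (a : letter) : letter :=
  match a with Lp => LP | LP => Lp | Lq => LQ | LQ => Lq | Lb => LB | LB => Lb end.

Definition linv (u : list letter) : list letter := rev (map letter_inv u).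
Definition lpow (u : list letter) (n : nat) : list letter := concat (repeat u n).

Definition block (bit : bool) : list letter :=
  if bit then [Lq; Lb; LQ; LB] else [Lp; Lb; LP; LB].
Definition bits (k : nat) : list bool := repeat false k ++ [true; true; false; true].
Definition wletters (k : nat) : list letter := flat_map block (bits k).

Lemma length_block bit : length (block bit) = 4.
Proof. now destruct bit. Qed.

Lemma length_linv u : length (linv u) = length u.
Proof. unfold linv. now rewrite length_rev, length_map. Qed.

Lemma length_lpow u n : length (lpow u n) = n * length u.
Proof. unfold lpow. induction n as [|n IH]; simpl; auto. rewrite length_app, IH. lia. Qed.

Lemma length_flat_map_const {T U} (f : T -> list U) L l :
  (forall x, length (f x) = L) -> length (flat_map f l) = L * length l.
Proof. intro H. induction l as [|x l IH]; simpl; auto. rewrite length_app, H, IH. lia. Qed.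

Lemma length_wletters k : length (wletters k) = 4 * (k + 4).
Proof.
  unfold wletters. rewrite (length_flat_map_const _ 4) by apply length_block.
  unfold bits. rewrite length_app, repeat_length. reflexivity.
Qed.

Lemma wletters_nonempty k : wletters k <> [].
Proof. intro E. pose proof (length_wletters k) as H. rewrite E in H. simpl in H. lia. Qed.

Lemma linv_wletters_nonempty k : linv (wletters k) <> [].
Proof.
  intro E. apply (f_equal (@length letter)) in E.
  rewrite length_linv, length_wletters in E. simpl in E. lia.
Qed.

Lemma even_length_wletters k : Nat.even (length (wletters k)) = true.
Proof. rewrite length_wletters, Nat.even_mul. reflexivity. Qed.

Lemma linv_app u1 u2 : linv (u1 ++ u2) = linv u2 ++ linv u1.
Proof. unfold linv. now rewrite map_app, rev_app_distr. Qed.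

Lemma linv_flat_map (f : bool -> list letter) l :
  linv (flat_map f l) = flat_map (fun x => linv (f x)) (rev l).
Proof.
  induction l as [|x l IH]; simpl; auto.
  rewrite linv_app, IH, flat_map_app. simpl. now rewrite app_nil_r.
Qed.

Lemma flat_map_repeat {T U} (f : T -> list U) x n : flat_map f (repeat x n) = concat (repeat (f x) n).
Proof. induction n as [|n IH]; simpl; auto. now rewrite IH. Qed.

Lemma wletters_eq k :
  wletters k = lpow (block false) k ++ flat_map block [true; true; false; true].
Proof. unfold wletters, bits. now rewrite flat_map_app, flat_map_repeat. Qed.

Lemma linv_wletters_eq k :
  linv (wletters k) =
  flat_map (fun x => linv (block x)) [true; false; true; true] ++ lpow (linv (block false)) k.
Proof.
  unfold wletters, bits. rewrite linv_flat_map, rev_app_distr, rev_repeat, flat_map_app.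
  now rewrite flat_map_repeat.
Qed.

Lemma nth_lpow (u : list letter) n m d :
  u <> [] -> m < n * length u -> nth m (lpow u n) d = nth (m mod length u) u d.
Proof.
  intro Hu. assert (L : length u > 0) by (destruct u; simpl; [tauto|lia]).
  revert m. induction n as [|n IH]; intros m Hm; [simpl in Hm; lia|].
  change (lpow u (S n)) with (u ++ lpow u n). simpl in Hm.
  destruct (Nat.lt_ge_cases m (length u)) as [h|h].
  - rewrite app_nth1, Nat.mod_small; auto.
  - rewrite app_nth2, IH by lia.
    replace m with ((m - length u) + 1 * length u) at 2 by lia.
    now rewrite Nat.Div0.mod_add.
Qed.

Lemma nth_flat_map_const {T U} (f : T -> list U) L l m x0 d :
  (forall x, length (f x) = L) -> m < L * length l ->
  nth m (flat_map f l) d = nth (m mod L) (f (nth (m / L) l x0)) d.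
Proof.
  intro H. revert m. induction l as [|x l IH]; intros m Hm; [simpl in Hm; lia|].
  change (flat_map f (x :: l)) with (f x ++ flat_map f l). simpl in Hm.
  destruct (Nat.lt_ge_cases m L) as [h|h].
  - rewrite app_nth1 by (rewrite H; auto).
    now rewrite Nat.mod_small, Nat.div_small.
  - rewrite app_nth2, H, IH by (rewrite ?H; lia).
    assert (E : m = (m - L) + 1 * L) by lia.
    replace (m mod L) with ((m - L) mod L) by (rewrite E at 2; symmetry; apply Nat.Div0.mod_add).
    replace (m / L) with (S ((m - L) / L)) by (rewrite E at 2; rewrite Nat.div_add; lia).
    reflexivity.
Qed.

Definition periodic_bit (k x : nat) : bool := nth (x mod (k + 4)) (bits k) false.

Lemma nth_lpow_wletters k n m :
  m < length (lpow (wletters k) n) ->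
  nth m (lpow (wletters k) n) Lb = nth (m mod 4) (block (periodic_bit k (m / 4))) Lb.
Proof.
  rewrite length_lpow. intro Hm.
  rewrite nth_lpow, length_wletters by auto using wletters_nonempty. unfold wletters.
  assert (Hlt : m mod (4 * (k + 4)) < 4 * length (bits k)).
  { unfold bits. rewrite length_app, repeat_length. simpl. apply Nat.mod_upper_bound. lia. }
  rewrite (nth_flat_map_const _ 4 _ _ false _ length_block Hlt).
  rewrite Nat.Div0.mod_mul_r.
  assert (Ha : m mod 4 < 4) by (apply Nat.mod_upper_bound; lia).
  set (r := m mod 4) in *. set (x := (m / 4) mod (k + 4)).
  replace ((r + 4 * x) mod 4) with r by (apply Nat.mod_unique with x; lia).
  replace ((r + 4 * x) / 4) with x by (apply Nat.div_unique with r; lia).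
  reflexivity.
Qed.

Lemma nth_bits_tail k j : nth (k + j) (bits k) false = nth j [true; true; false; true] false.
Proof. unfold bits. rewrite app_nth2; rewrite repeat_length; [f_equal|]; lia. Qed.

Lemma nth_bits_head k r : r < k -> nth r (bits k) false = false.
Proof. intro H. unfold bits. rewrite app_nth1 by (now rewrite repeat_length). apply nth_repeat. Qed.

Lemma periodic_bit_add k x e :
  periodic_bit k (x + e) = nth ((x mod (k + 4) + e) mod (k + 4)) (bits k) false.
Proof. unfold periodic_bit. now rewrite Nat.Div0.add_mod_idemp_l. Qed.

Lemma exists_true_bit k x : 2 <= k -> x mod (k + 4) <> 0 ->
  exists e, e < k /\ periodic_bit k (x + e) = true.
Proof.
  intros Hk H0. pose proof (Nat.mod_upper_bound x (k + 4) ltac:(lia)) as Hx.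
  setoid_rewrite periodic_bit_add. set (rho := x mod (k + 4)) in *.
  destruct (Nat.le_gt_cases rho k) as [h|h].
  - exists (k - rho). split; [lia|].
    rewrite Nat.mod_small by lia. replace (rho + (k - rho)) with (k + 0) by lia.
    now rewrite nth_bits_tail.
  - assert (E : rho = k + 1 \/ rho = k + 2 \/ rho = k + 3) by lia.
    destruct E as [-> | [-> | ->]];
      [exists 0 | exists 1 | exists 0]; (split; [lia|]);
      rewrite Nat.mod_small by lia; rewrite <- Nat.add_assoc; now rewrite nth_bits_tail.
Qed.

Lemma exists_bit k x (c : bool) : 2 <= k -> exists e, e <= k /\ periodic_bit k (x + e) = c.
Proof.
  intro Hk. destruct c.
  - destruct (Nat.eq_dec (x mod (k + 4)) 0) as [H0|H0].
    + exists k. split; [lia|]. rewrite periodic_bit_add, H0, Nat.mod_small by lia.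
      replace (0 + k) with (k + 0) by lia. now rewrite nth_bits_tail.
    + destruct (exists_true_bit k x Hk H0) as [e [He Hb]]. exists e. split; [lia|auto].
  - pose proof (Nat.mod_upper_bound x (k + 4) ltac:(lia)) as Hx.
    setoid_rewrite periodic_bit_add. set (rho := x mod (k + 4)) in *.
    destruct (Nat.lt_ge_cases rho k) as [h|h].
    + exists 0. split; [lia|]. rewrite Nat.mod_small by lia. apply nth_bits_head. lia.
    + assert (E : rho = k \/ rho = k + 1 \/ rho = k + 2 \/ rho = k + 3) by lia.
      destruct E as [-> | [-> | [-> | ->]]].
      * exists 2. split; [lia|]. rewrite Nat.mod_small by lia. now rewrite nth_bits_tail.
      * exists 1. split; [lia|]. rewrite Nat.mod_small by lia.
        rewrite <- Nat.add_assoc. now rewrite nth_bits_tail.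
      * exists 0. split; [lia|]. rewrite Nat.mod_small by lia.
        rewrite Nat.add_0_r. now rewrite nth_bits_tail.
      * exists 1. split; [lia|]. replace (k + 3 + 1) with (1 * (k + 4)) by lia.
        rewrite Nat.Div0.mod_mul. apply nth_bits_head. lia.
Qed.

Definition col_match (col : letter -> nat) (V T : list letter) (o : nat) : Prop :=
  o + length V <= length T /\
  forall j, j < length V -> col (nth j V Lb) = col (nth (o + j) T Lb).

Lemma nth_wletters_run k e : e < k -> nth (4 * e) (wletters k) Lb = Lp.
Proof.
  intro He. rewrite wletters_eq, app_nth1 by (rewrite length_lpow; simpl; lia).
  rewrite nth_lpow by (discriminate || simpl; lia). simpl length.
  now replace (4 * e) with (0 + e * 4) by lia; rewrite Nat.Div0.mod_add.
Qed.

Lemma nth_linv_wletters_run k e d : e < k -> d < 4 ->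
  nth (16 + (4 * e + d)) (linv (wletters k)) Lb = nth d (linv (block false)) Lb.
Proof.
  intros He Hd. rewrite linv_wletters_eq, app_nth2 by (simpl; lia).
  simpl length. replace (16 + (4 * e + d) - 16) with (d + e * 4) by lia.
  rewrite nth_lpow by (discriminate || simpl; nia). simpl length.
  now rewrite Nat.Div0.mod_add, Nat.mod_small.
Qed.

Lemma nth_linv_wletters_5 k : nth 5 (linv (wletters k)) Lb = Lp.
Proof. now rewrite linv_wletters_eq. Qed.

Section Colouring.
Variable col : letter -> nat.
Variable k : nat.

Definition text_col (m : nat) : nat :=
  col (nth (m mod 4) (block (periodic_bit k (m / 4))) Lb).

Lemma text_col_at x r : r < 4 -> text_col (4 * x + r) = col (nth r (block (periodic_bit k x)) Lb).
Proof.
  intro Hr. unfold text_col.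
  replace ((4 * x + r) mod 4) with r by (apply Nat.mod_unique with x; lia).
  now replace ((4 * x + r) / 4) with x by (apply Nat.div_unique with r; lia).
Qed.

Lemma text_col_shift s e : text_col (s + 4 * e) = col (nth (s mod 4) (block (periodic_bit k (s / 4 + e))) Lb).
Proof.
  rewrite <- text_col_at by (apply Nat.mod_upper_bound; lia). f_equal.
  pose proof (Nat.div_mod s 4 ltac:(lia)). lia.
Qed.

Lemma text_col_match n V o j : col_match col V (lpow (wletters k) n) o -> j < length V ->
  col (nth j V Lb) = text_col (o + j).
Proof.
  intros [Hlen Hm] Hj. rewrite Hm by auto. unfold text_col.
  now rewrite nth_lpow_wletters by lia.
Qed.

Hypothesis col_Lp : col Lp = 0.
Hypothesis col_Lq : col Lq = 1.
Hypothesis col_Lb : col Lb = 2.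
Hypothesis col_LB : col LB = 2.
Hypothesis col_LP_LQ : (col LP = 0 /\ col LQ = 1) \/ (col LP = 1 /\ col LQ = 0).
Hypothesis k_ge2 : 2 <= k.

Lemma exists_separating_bit :
  exists c, col (nth 2 (block c) Lb) = 1 /\ col (nth 0 (block c) Lb) <> col LP.
Proof. destruct col_LP_LQ as [[H1 H2] | [H1 H2]]; [exists true | exists false]; simpl; lia. Qed.

Lemma no_long_run s : ~ (forall e, e <= k -> text_col (s + 4 * e) = 0).
Proof.
  intro H. setoid_rewrite text_col_shift in H.
  assert (Hr : s mod 4 < 4) by (apply Nat.mod_upper_bound; lia).
  assert (E : s mod 4 = 0 \/ s mod 4 = 2 \/ s mod 4 = 1 \/ s mod 4 = 3) by lia.
  destruct E as [E | [E | [E | E]]]; rewrite E in H.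
  - destruct (exists_bit k (s / 4) true k_ge2) as [e [He Hb]].
    specialize (H e He). rewrite Hb in H. simpl in H. lia.
  - destruct exists_separating_bit as [c [Hc _]].
    destruct (exists_bit k (s / 4) c k_ge2) as [e [He Hb]].
    specialize (H e He). rewrite Hb in H. lia.
  - specialize (H 0 ltac:(lia)). destruct (periodic_bit k (s / 4 + 0)); simpl in H; lia.
  - specialize (H 0 ltac:(lia)). destruct (periodic_bit k (s / 4 + 0)); simpl in H; lia.
Qed.

Lemma run_aligned s :
  (forall e, e < k -> text_col (s + 4 * e) = 0 /\ text_col (s + 4 * e + 2) = col LP) ->
  s mod 4 = 0 /\ (s / 4) mod (k + 4) = 0.
Proof.
  intro H.
  assert (H0 : forall e, e < k ->
    col (nth (s mod 4) (block (periodic_bit k (s / 4 + e))) Lb) = 0).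
  { intros e He. rewrite <- text_col_shift. apply H, He. }
  assert (Hs : s = 4 * (s / 4) + s mod 4) by (apply Nat.div_mod; lia).
  assert (Hr : s mod 4 < 4) by (apply Nat.mod_upper_bound; lia).
  assert (E : s mod 4 = 0 \/ s mod 4 = 2 \/ s mod 4 = 1 \/ s mod 4 = 3) by lia.
  destruct E as [E | [E | [E | E]]]; rewrite E in H0.
  - split; [auto|]. destruct (Nat.eq_dec ((s / 4) mod (k + 4)) 0) as [|Hne]; [auto|].
    destruct (exists_true_bit k (s / 4) k_ge2 Hne) as [e [He Hb]].
    specialize (H0 e He). rewrite Hb in H0. simpl in H0. lia.
  - exfalso. destruct exists_separating_bit as [c [Hc2 Hc0]].
    destruct (exists_bit k (s / 4) c k_ge2) as [e [He Hb]].
    destruct (Nat.eq_dec e k) as [->|Hek].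
    + destruct (H (k - 1) ltac:(lia)) as [_ HP].
      replace (s + 4 * (k - 1) + 2) with (4 * (s / 4 + k) + 0) in HP by lia.
      rewrite text_col_at, Hb in HP by lia. contradiction.
    + specialize (H0 e ltac:(lia)). rewrite Hb in H0. lia.
  - specialize (H0 0 ltac:(lia)). destruct (periodic_bit k (s / 4 + 0)); simpl in H0; lia.
  - specialize (H0 0 ltac:(lia)). destruct (periodic_bit k (s / 4 + 0)); simpl in H0; lia.
Qed.

Lemma text_col_before_period x : x mod (k + 4) = 0 -> 1 <= x -> text_col (4 * x - 12) = 1.
Proof.
  intros Hx Hx1.
  assert (Ex : x = (k + 4) * (x / (k + 4))) by (rewrite (Nat.div_mod x (k + 4)) at 1; lia).
  assert (Hq : 1 <= x / (k + 4)) by nia.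
  replace (4 * x - 12) with (4 * (x - 3) + 0) by lia. rewrite text_col_at by lia.
  unfold periodic_bit.
  replace ((x - 3) mod (k + 4)) with (k + 1)
    by (apply Nat.mod_unique with (x / (k + 4) - 1); nia).
  now rewrite nth_bits_tail.
Qed.

Lemma no_match_linv n o : ~ col_match col (linv (wletters k)) (lpow (wletters k) n) o.
Proof.
  intro Hm. pose proof (proj1 Hm) as Hlen. rewrite length_linv, length_wletters in Hlen.
  assert (Hrun : forall e, e < k ->
    text_col (o + 17 + 4 * e) = 0 /\ text_col (o + 17 + 4 * e + 2) = col LP).
  { intros e He.
    replace (o + 17 + 4 * e) with (o + (16 + (4 * e + 1))) by lia.
    replace (o + (16 + (4 * e + 1)) + 2) with (o + (16 + (4 * e + 3))) by lia.
    rewrite <- !(text_col_match n _ o _ Hm), !nth_linv_wletters_run by (rewrite ?length_linv, ?length_wletters; lia).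
    simpl. auto. }
  destruct (run_aligned _ Hrun) as [Hr Hx].
  assert (H5 : text_col (4 * ((o + 17) / 4) - 12) = 1)
    by (apply text_col_before_period; [auto | apply Nat.div_le_lower_bound; lia]).
  replace (4 * ((o + 17) / 4) - 12) with (o + 5) in H5
    by (pose proof (Nat.div_mod (o + 17) 4 ltac:(lia)); lia).
  rewrite <- (text_col_match n _ o _ Hm), nth_linv_wletters_5 in H5
    by (rewrite length_linv, length_wletters; lia).
  lia.
Qed.

Lemma no_match_longer k' n o : k < k' -> ~ col_match col (wletters k') (lpow (wletters k) n) o.
Proof.
  intros Hkk Hm. pose proof (proj1 Hm) as Hlen. rewrite length_wletters in Hlen.
  apply (no_long_run o). intros e He.
  rewrite <- (text_col_match n _ o _ Hm), nth_wletters_run by (rewrite ?length_wletters; lia).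
  auto.
Qed.

Lemma no_match_longer_linv k' n o : k < k' ->
  ~ col_match col (linv (wletters k')) (lpow (wletters k) n) o.
Proof.
  intros Hkk Hm. pose proof (proj1 Hm) as Hlen. rewrite length_linv, length_wletters in Hlen.
  apply (no_long_run (o + 17)). intros e He.
  replace (o + 17 + 4 * e) with (o + (16 + (4 * e + 1))) by lia.
  rewrite <- (text_col_match n _ o _ Hm), nth_linv_wletters_run
    by (rewrite ?length_linv, ?length_wletters; lia).
  auto.
Qed.

End Colouring.

Section GroupLemmas.
Variable G : Group.
Local Infix "**" := (@gmul G) (at level 40, left associativity).

Lemma mulgA (x y z : G) : x ** (y ** z) = x ** y ** z.
Proof. apply gmulA. Qed.
Lemma mul1g (x : G) : gone ** x = x.
Proof. apply gmul1g. Qed.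
Lemma mulVg (x : G) : ginv x ** x = gone.
Proof. apply gmulVg. Qed.

Lemma mulgV (x : G) : x ** ginv x = gone.
Proof.
  rewrite <- (mul1g (x ** ginv x)), <- (mulVg (ginv x)) at 1.
  rewrite <- mulgA, (mulgA (ginv x) x), mulVg, mul1g. apply mulVg.
Qed.

Lemma mulg1 (x : G) : x ** gone = x.
Proof. now rewrite <- (mulVg x), mulgA, mulgV, mul1g. Qed.

Lemma invgK (x : G) : ginv (ginv x) = x.
Proof. now rewrite <- (mulg1 (ginv (ginv x))), <- (mulVg x), mulgA, mulVg, mul1g. Qed.

Lemma invg_uniq (x y : G) : x ** y = gone -> y = ginv x.
Proof. intro H. now rewrite <- (mul1g y), <- (mulVg x), <- mulgA, H, mulg1. Qed.

Lemma invgM (x y : G) : ginv (x ** y) = ginv y ** ginv x.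
Proof.
  symmetry. apply invg_uniq. now rewrite <- mulgA, (mulgA y), mulgV, mul1g, mulgV.
Qed.

Lemma mulKg (x y : G) : ginv x ** (x ** y) = y.
Proof. now rewrite mulgA, mulVg, mul1g. Qed.
Lemma mulKVg (x y : G) : x ** (ginv x ** y) = y.
Proof. now rewrite mulgA, mulgV, mul1g. Qed.
Lemma mulgK (x y : G) : y ** x ** ginv x = y.
Proof. now rewrite <- mulgA, mulgV, mulg1. Qed.
Lemma mulgKV (x y : G) : y ** ginv x ** x = y.
Proof. now rewrite <- mulgA, mulVg, mulg1. Qed.

Lemma commutator_word (x y : G) :
  eval G [x; y; ginv x; ginv y] = commutator G (ginv x) (ginv y).
Proof. unfold commutator. simpl. now rewrite !invgK, mulg1, !mulgA. Qed.

Section Subgroup.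
Variable P : G -> Prop.
Hypothesis HP : is_subgroup G P.

Lemma group1 : P gone. Proof. apply HP. Qed.
Lemma groupM x y : P x -> P y -> P (x ** y). Proof. apply HP. Qed.
Lemma groupV x : P x -> P (ginv x). Proof. apply HP. Qed.

Lemma groupVr x : P (ginv x) -> P x.
Proof. intro H. rewrite <- invgK. now apply groupV. Qed.

Lemma groupMr x y : P y -> P (x ** y) -> P x.
Proof. intros Hy Hxy. rewrite <- (mulgK y x). now apply groupM, groupV. Qed.
End Subgroup.

Lemma eval_app (u1 u2 : list G) : eval G (u1 ++ u2) = eval G u1 ** eval G u2.
Proof. induction u1 as [|x u1 IH]; simpl; [now rewrite mul1g | now rewrite IH, mulgA]. Qed.

End GroupLemmas.

(** * The action of an amalgamated product on its normal forms *)

Section Amalgam.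
Variable G : Group.
Local Infix "**" := (@gmul G) (at level 40, left associativity).
Variables A B : G -> Prop.
Hypothesis HA : is_subgroup G A.
Hypothesis HB : is_subgroup G B.

Definition C (x : G) : Prop := A x /\ B x.

Lemma C_subgroup : is_subgroup G C.
Proof.
  unfold C; split; [|split].
  - split; apply group1; auto.
  - intros x y [] []; split; apply groupM; auto.
  - intros x []; split; apply groupV; auto.
Qed.

Lemma C1 : C gone. Proof. apply group1, C_subgroup. Qed.
Lemma CM x y : C x -> C y -> C (x ** y). Proof. apply groupM, C_subgroup. Qed.
Lemma CV x : C x -> C (ginv x). Proof. apply groupV, C_subgroup. Qed.

Lemma CM_iff g c : C c -> (C (g ** c) <-> C g).
Proof.
  intro Hc. split; intro H; [exact (groupMr _ _ C_subgroup _ _ Hc H) | now apply CM].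
Qed.

Lemma notC_inv x : ~ C x -> ~ C (ginv x).
Proof. intros H H'. apply H. rewrite <- invgK. now apply CV. Qed.

Definition factor (P : G -> Prop) : Prop := P = A \/ P = B.

Lemma factorA : factor A. Proof. now left. Qed.
Lemma factorB : factor B. Proof. now right. Qed.

Lemma factor_subgroup P : factor P -> is_subgroup G P.
Proof. now intros [-> | ->]. Qed.

Lemma factor_C P x : factor P -> C x -> P x.
Proof. now intros [-> | ->] []. Qed.

Lemma factor_of x : A x \/ B x -> exists P, factor P /\ P x.
Proof. intros [H|H]; [exists A | exists B]; split; auto using factorA, factorB. Qed.

Notation dec P := (excluded_middle_informative P).

Definition rep (g : G) : G :=
  if dec (C g) then gone
  else epsilon (inhabits gone) (fun t => exists c, C c /\ t = g ** c).

Definition cof (g : G) : G := ginv (rep g) ** g.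

Lemma rep_spec g : exists c, C c /\ rep g = g ** c.
Proof.
  unfold rep. destruct (dec (C g)) as [h|h].
  - exists (ginv g). split; [now apply CV | now rewrite mulgV].
  - apply (epsilon_spec (inhabits gone) (fun t => exists c, C c /\ t = g ** c)).
    exists g, gone. split; [apply C1 | now rewrite mulg1].
Qed.

Lemma rep_mulC g c : C c -> rep (g ** c) = rep g.
Proof.
  intro Hc. unfold rep.
  destruct (dec (C (g ** c))) as [h1|h1]; destruct (dec (C g)) as [h2|h2]; auto.
  - exfalso. now apply h2, (CM_iff g c Hc).
  - exfalso. now apply h1, (CM_iff g c Hc).
  - f_equal. extensionality t. apply propositional_extensionality. split.
    + intros [c' [H1 ->]]. exists (c ** c'). split; [now apply CM | now rewrite mulgA].
    + intros [c' [H1 ->]]. exists (ginv c ** c'). split.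
      * apply CM; auto. now apply CV.
      * now rewrite <- mulgA, mulKVg.
Qed.

Lemma rep_idem g : rep (rep g) = rep g.
Proof. destruct (rep_spec g) as [c [Hc E]]. rewrite E at 1. now apply rep_mulC. Qed.

Lemma C_cof g : C (cof g).
Proof.
  unfold cof. destruct (rep_spec g) as [c [Hc ->]].
  rewrite invgM, <- mulgA, mulVg, mulg1. now apply CV.
Qed.

Lemma rep_cof g : rep g ** cof g = g.
Proof. apply mulKVg. Qed.

Lemma factor_rep P g : factor P -> P g -> P (rep g).
Proof.
  intros HP Hg. destruct (rep_spec g) as [c [Hc ->]].
  apply (groupM G P); [now apply factor_subgroup | auto | now apply factor_C].
Qed.

Lemma C_rep g : C (rep g) <-> C g.
Proof. destruct (rep_spec g) as [c [Hc ->]]. now apply CM_iff. Qed.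

Definition dcos (x y : G) : Prop := same_dcoset G C x y.

Lemma dcos_mul c1 x c2 : C c1 -> C c2 -> dcos x (c1 ** x ** c2).
Proof. intros; now exists c1, c2. Qed.

Lemma dcos_refl x : dcos x x.
Proof. rewrite <- (mul1g G x) at 2. rewrite <- (mulg1 G (gone ** x)). apply dcos_mul; apply C1. Qed.

Lemma dcos_sym x y : dcos x y -> dcos y x.
Proof.
  intros [c1 [c2 [H1 [H2 ->]]]]. exists (ginv c1), (ginv c2).
  split; [now apply CV | split; [now apply CV|]].
  now rewrite mulgA, mulKg, mulgK.
Qed.

Lemma dcos_trans x y z : dcos x y -> dcos y z -> dcos x z.
Proof.
  intros [c1 [c2 [H1 [H2 ->]]]] [d1 [d2 [K1 [K2 ->]]]].
  exists (d1 ** c1), (c2 ** d2). split; [now apply CM | split; [now apply CM|]].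
  now rewrite !mulgA.
Qed.

Lemma dcos_C x y : C x -> C y -> dcos x y.
Proof.
  intros Hx Hy. exists (y ** ginv x), gone.
  split; [apply CM; auto; now apply CV | split; [apply C1|]].
  now rewrite mulg1, mulgKV.
Qed.

Lemma dcos_factor P x y : factor P -> dcos x y -> P x -> P y.
Proof.
  intros HP [c1 [c2 [H1 [H2 ->]]]] Hx. assert (HS := factor_subgroup P HP).
  apply (groupM G P HS); [apply (groupM G P HS) |]; auto; now apply factor_C.
Qed.

Lemma dcos_factor_iff P x y : factor P -> dcos x y -> (P x <-> P y).
Proof. intros HP H. split; apply dcos_factor; auto using dcos_sym. Qed.

Lemma dcos_C_iff x y : dcos x y -> (C x <-> C y).
Proof.
  intro H. unfold C. rewrite (dcos_factor_iff A x y factorA H), (dcos_factor_iff B x y factorB H).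
  tauto.
Qed.

Lemma dcos_rep c e : C c -> dcos e (rep (c ** e)).
Proof. intro Hc. destruct (rep_spec (c ** e)) as [d [Hd ->]]. now apply dcos_mul. Qed.

Lemma dcos_rep1 e : dcos e (rep e).
Proof. rewrite <- (mul1g G e) at 2. apply dcos_rep, C1. Qed.

(** Reduced lists of coset representatives from alternating factors parametrize
    [G / C]; each factor acts on them by multiplication from the left. *)
Fixpoint reduced (l : list G) : Prop :=
  match l with
  | [] => True
  | e :: l' => ~ C e /\ (A e \/ B e) /\ rep e = e /\ reduced l' /\
      match l' with [] => True | e' :: _ => (A e -> ~ A e') /\ (B e -> ~ B e') end
  end.

Definition head_notin (P : G -> Prop) (l : list G) : Prop :=
  forall e l', l = e :: l' -> ~ P e.

Fixpoint pushC (c : G) (l : list G) : list G :=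
  match l with
  | [] => []
  | e :: l' => rep (c ** e) :: pushC (cof (c ** e)) l'
  end.

Definition prepend (g : G) (l : list G) : list G :=
  if dec (C g) then pushC g l else rep g :: pushC (cof g) l.

Definition act (P : G -> Prop) (g : G) (l : list G) : list G :=
  match l with
  | e :: l' => if dec (P e) then prepend (g ** e) l' else prepend g l
  | [] => prepend g l
  end.

Lemma pushC_mul l : forall c1 c2, C c1 -> C c2 -> pushC c1 (pushC c2 l) = pushC (c1 ** c2) l.
Proof.
  induction l as [|e l IH]; intros c1 c2 H1 H2; simpl; auto.
  destruct (rep_spec (c2 ** e)) as [d [Hd E]].
  assert (E2 : rep (c1 ** rep (c2 ** e)) = rep (c1 ** c2 ** e))
    by (rewrite E, mulgA, rep_mulC by auto; now rewrite mulgA).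
  rewrite IH by apply C_cof. rewrite <- E2. f_equal. f_equal.
  unfold cof. now rewrite E2, <- !mulgA, mulKVg.
Qed.

Lemma pushC_1 l : reduced l -> pushC gone l = l.
Proof.
  induction l as [|e l IH]; simpl; auto. intros [_ [_ [Hr [Hl _]]]].
  unfold cof. rewrite mul1g, Hr, mulVg. f_equal. auto.
Qed.

Definition dcos_rep_of (e e' : G) : Prop := dcos e e' /\ rep e' = e'.

Lemma pushC_dcos_rep l : forall c, C c -> Forall2 dcos_rep_of l (pushC c l).
Proof.
  induction l as [|e l IH]; intros c Hc; simpl; constructor.
  - split; [now apply dcos_rep | apply rep_idem].
  - apply IH, C_cof.
Qed.

Lemma pushC_dcos l c : C c -> Forall2 dcos l (pushC c l).
Proof.
  intro Hc. apply (Forall2_impl (R1 := dcos_rep_of)); [now intros ? ? [] | now apply pushC_dcos_rep].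
Qed.

Lemma reduced_dcos_rep l l' : Forall2 dcos_rep_of l l' -> reduced l -> reduced l'.
Proof.
  intro H. induction H as [|e e' l l' [Hs Hr] Hl IH]; simpl; auto.
  intros [H1 [H2 [_ [H4 H5]]]].
  rewrite <- (dcos_C_iff _ _ Hs), <- (dcos_factor_iff A _ _ factorA Hs),
    <- (dcos_factor_iff B _ _ factorB Hs).
  repeat split; auto.
  destruct Hl as [|f f' m m' [Hf _] _]; auto.
  now rewrite <- (dcos_factor_iff A _ _ factorA Hs), <- (dcos_factor_iff B _ _ factorB Hs),
    <- (dcos_factor_iff A _ _ factorA Hf), <- (dcos_factor_iff B _ _ factorB Hf).
Qed.

Lemma head_notin_dcos P l l' : factor P -> Forall2 dcos l l' -> head_notin P l -> head_notin P l'.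
Proof.
  intros HP H Hn e m ->. inversion H as [|x y l0 l1 Hxy Hr]; subst. intro He.
  apply (Hn x l0 eq_refl). now apply (dcos_factor_iff P _ _ HP Hxy).
Qed.

Lemma reduced_pushC c l : C c -> reduced l -> reduced (pushC c l).
Proof. intros. eapply reduced_dcos_rep; eauto. now apply pushC_dcos_rep. Qed.

Lemma head_notin_pushC P c l : factor P -> C c -> head_notin P l -> head_notin P (pushC c l).
Proof. intros. eapply head_notin_dcos; eauto. now apply pushC_dcos. Qed.

Lemma prepend_pushC g c l : C c -> prepend g (pushC c l) = prepend (g ** c) l.
Proof.
  intro Hc. unfold prepend.
  destruct (dec (C g)) as [h1|h1]; destruct (dec (C (g ** c))) as [h2|h2].
  - now apply pushC_mul.
  - exfalso. now apply h2, CM.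
  - exfalso. now apply h1, (CM_iff g c Hc).
  - rewrite rep_mulC by auto. f_equal. rewrite pushC_mul by (auto using C_cof).
    unfold cof. now rewrite rep_mulC, mulgA.
Qed.

Lemma act_head_notin P g l : head_notin P l -> act P g l = prepend g l.
Proof.
  intro H. destruct l as [|e l]; simpl; auto. destruct (dec (P e)); auto.
  exfalso. eapply H; eauto.
Qed.

Lemma act_decomp P l : factor P -> reduced l ->
  exists g0 l0, P g0 /\ reduced l0 /\ head_notin P l0 /\ (l0 = l \/ exists e, l = e :: l0) /\
    forall g, act P g l = prepend (g ** g0) l0.
Proof.
  intros HP Hl. assert (HS := factor_subgroup P HP).
  destruct l as [|e l].
  - exists gone, []. split; [now apply group1|]. split; [exact I|].
    split; [intros e l' E; discriminate|]. split; [now left|].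
    intro g. now rewrite mulg1.
  - simpl. destruct (dec (P e)) as [h|h].
    + exists e, l. destruct Hl as [H1 [H2 [H3 [H4 H5]]]].
      split; [auto|]. split; [auto|]. split.
      * intros e' l' ->. destruct HP as [-> | ->]; now apply H5.
      * split; eauto.
    + exists gone, (e :: l). split; [now apply group1|]. split; [auto|]. split.
      * intros e' l' E. now injection E as -> ->.
      * split; [now left|]. intro g. now rewrite mulg1.
Qed.

Lemma act_prepend P g1 g2 l : factor P -> P g1 -> P g2 -> reduced l -> head_notin P l ->
  act P g1 (prepend g2 l) = prepend (g1 ** g2) l.
Proof.
  intros HP H1 H2 Hl Hn. unfold prepend at 1. destruct (dec (C g2)) as [h|h].
  - rewrite act_head_notin by now apply head_notin_pushC. now apply prepend_pushC.
  - simpl. destruct (dec (P (rep g2))) as [h'|h'].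
    + rewrite prepend_pushC by apply C_cof. now rewrite <- mulgA, rep_cof.
    + exfalso. now apply h', factor_rep.
Qed.

Lemma act_mul P g1 g2 l : factor P -> P g1 -> P g2 -> reduced l ->
  act P g1 (act P g2 l) = act P (g1 ** g2) l.
Proof.
  intros HP H1 H2 Hl.
  destruct (act_decomp P l HP Hl) as [g0 [l0 [Hg0 [Hl0 [Hn0 [_ E]]]]]].
  rewrite !E, act_prepend, mulgA; auto. apply (groupM G P); auto. now apply factor_subgroup.
Qed.

Lemma act_1 P l : factor P -> reduced l -> act P gone l = l.
Proof.
  intros HP Hl. unfold act, prepend. destruct l as [|e l].
  - destruct (dec (C gone)); auto. exfalso; auto using C1.
  - destruct (dec (P e)) as [h|h].
    + rewrite mul1g. destruct Hl as [H1 [H2 [H3 [H4 H5]]]].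
      destruct (dec (C e)); [tauto|]. unfold cof. now rewrite H3, mulVg, pushC_1.
    + destruct (dec (C gone)) as [h'|h']; [|exfalso; auto using C1]. now apply pushC_1.
Qed.

Lemma reduced_prepend P h l : factor P -> P h -> reduced l -> head_notin P l -> reduced (prepend h l).
Proof.
  intros HP Hh Hl Hn. unfold prepend. destruct (dec (C h)) as [c|c].
  - now apply reduced_pushC.
  - assert (Hn' := head_notin_pushC P _ l HP (C_cof h) Hn).
    assert (Hl' := reduced_pushC _ l (C_cof h) Hl).
    assert (HPr : P (rep h)) by now apply factor_rep.
    assert (HCr : ~ C (rep h)) by now rewrite C_rep.
    simpl. repeat split; auto using rep_idem.
    + destruct HP as [-> | ->]; auto.
    + destruct (pushC (cof h) l) as [|e' m] eqn:E; auto.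
      assert (~ P e') by (eapply Hn'; eauto).
      destruct HP as [-> | ->]; split; intros; auto; intro; apply HCr; split; auto.
Qed.

Lemma reduced_act P g l : factor P -> P g -> reduced l -> reduced (act P g l).
Proof.
  intros HP Hg Hl.
  destruct (act_decomp P l HP Hl) as [g0 [l0 [Hg0 [Hl0 [Hn0 [_ ->]]]]]].
  apply reduced_prepend with P; auto. apply (groupM G P); auto. now apply factor_subgroup.
Qed.

Lemma act_C P c l : factor P -> C c -> reduced l -> act P c l = pushC c l.
Proof.
  intros HP Hc Hl. unfold act, prepend. destruct l as [|e l].
  - destruct (dec (C c)); tauto.
  - destruct (dec (P e)) as [h|h].
    + destruct (dec (C (c ** e))) as [h'|h']; auto.
      exfalso. apply Hl. rewrite <- (mulKg G c e). apply CM; auto. now apply CV.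
    + destruct (dec (C c)); tauto.
Qed.

Definition NF := {l : list G | reduced l}.

Lemma NF_eq (x y : NF) : proj1_sig x = proj1_sig y -> x = y.
Proof. destruct x, y; simpl; intros ->; f_equal; apply proof_irrelevance. Qed.

Record perm := Perm {
  perm_fun : NF -> NF;
  perm_inv : NF -> NF;
  perm_funK : forall x, perm_fun (perm_inv x) = x;
  perm_invK : forall x, perm_inv (perm_fun x) = x }.

Lemma perm_ext (p q : perm) : perm_fun p = perm_fun q -> perm_inv p = perm_inv q -> p = q.
Proof. destruct p, q; simpl; intros -> ->. f_equal; apply proof_irrelevance. Qed.

Definition perm_mul (p q : perm) : perm.
Proof.
  refine (Perm (fun x => perm_fun p (perm_fun q x)) (fun x => perm_inv q (perm_inv p x)) _ _);
    intro x; now rewrite ?perm_funK, ?perm_invK.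
Defined.

Definition perm_one : perm := Perm (fun x => x) (fun x => x) (fun _ => eq_refl) (fun _ => eq_refl).

Definition perm_invg (p : perm) : perm := Perm (perm_inv p) (perm_fun p) (perm_invK p) (perm_funK p).

Definition Sym : Group.
Proof.
  refine (Build_Group perm perm_mul perm_one perm_invg _ _ _); intros; apply perm_ext;
    try reflexivity; simpl; extensionality y; apply perm_invK.
Defined.

Definition act_NF P (HP : factor P) g (hg : P g) (x : NF) : NF :=
  exist _ (act P g (proj1_sig x)) (reduced_act P g _ HP hg (proj2_sig x)).

Definition act_perm P (HP : factor P) g (hg : P g) : perm.
Proof.
  assert (hg' : P (ginv g)) by (apply groupV; auto using factor_subgroup).
  refine (Perm (act_NF P HP g hg) (act_NF P HP (ginv g) hg') _ _);
    intros [l Hl]; apply NF_eq; simpl; rewrite act_mul by auto.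
  - rewrite mulgV. now apply act_1.
  - rewrite mulVg. now apply act_1.
Defined.

Definition factor_perm P (HP : factor P) (g : G) : perm :=
  match dec (P g) with left h => act_perm P HP g h | right _ => perm_one end.

Lemma factor_perm_eq P (HP : factor P) g (h : P g) : factor_perm P HP g = act_perm P HP g h.
Proof. unfold factor_perm. destruct (dec (P g)); [|tauto]. f_equal. apply proof_irrelevance. Qed.

Lemma factor_perm_hom P (HP : factor P) : hom_on G Sym P (factor_perm P HP).
Proof.
  intros x y hx hy. assert (HS := factor_subgroup P HP).
  assert (hxy : P (x ** y)) by now apply groupM.
  rewrite (factor_perm_eq P HP _ hxy), (factor_perm_eq P HP _ hx), (factor_perm_eq P HP _ hy).
  apply perm_ext; simpl; extensionality z; destruct z as [l Hl]; apply NF_eq; simpl.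
  - now rewrite act_mul.
  - rewrite act_mul, invgM; auto; now apply (groupV G P HS).
Qed.

Lemma factor_perm_agree c : A c -> B c -> factor_perm A factorA c = factor_perm B factorB c.
Proof.
  intros ha hb. assert (Hc : C c) by now split.
  rewrite (factor_perm_eq A factorA c ha), (factor_perm_eq B factorB c hb).
  apply perm_ext; simpl; extensionality z; destruct z as [l Hl]; apply NF_eq; simpl;
    rewrite !act_C; auto using factorA, factorB, CV.
Qed.

Lemma action_hom_exists : is_amalgam G A B ->
  exists F : G -> Sym, is_hom G Sym F /\
    forall P (HP : factor P) g, P g -> F g = factor_perm P HP g.
Proof.
  intros [_ [_ Hu]].
  destruct (Hu Sym (factor_perm A factorA) (factor_perm B factorB)
    (factor_perm_hom A factorA) (factor_perm_hom B factorB) factor_perm_agree)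
    as [[F [HF [HFA HFB]]] _].
  exists F. split; auto. intros P HP g Hg.
  destruct HP as [E | E]; subst P;
    [rewrite HFA | rewrite HFB]; auto; f_equal; apply proof_irrelevance.
Qed.

(** * Parsing normal forms *)

Lemma Forall2_dcos_sym l l' : Forall2 dcos l l' -> Forall2 dcos l' l.
Proof. intro H; induction H; constructor; auto using dcos_sym. Qed.

Lemma Forall2_dcos_trans l1 : forall l2 l3,
  Forall2 dcos l1 l2 -> Forall2 dcos l2 l3 -> Forall2 dcos l1 l3.
Proof.
  induction l1; intros l2 l3 H1 H2; inversion H1; subst; inversion H2; subst; constructor;
    eauto using dcos_trans.
Qed.

Inductive parse (v : list G) : list G -> nat -> Prop :=
  | parse_nil : parse v [] 0
  | parse_entry e l k : parse v l k -> parse v (e :: l) (S k)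
  | parse_block l1 l2 k :
      Forall2 dcos v l1 -> parse v l2 k -> parse v (l1 ++ l2) (length v - 1 + k).

Definition cost (v l : list G) : nat := natmin (parse v l).

Lemma parse_entries v a l k : parse v l k -> parse v (a ++ l) (length a + k).
Proof. induction a; simpl; auto using parse_entry. Qed.

Lemma parse_length v l : parse v l (length l).
Proof.
  pose proof (parse_entries v l [] 0 (parse_nil v)) as H.
  now rewrite app_nil_r, Nat.add_0_r in H.
Qed.

Lemma cost_spec v l : parse v l (cost v l) /\ forall k, parse v l k -> cost v l <= k.
Proof. apply natmin_spec. exists (length l). apply parse_length. Qed.

Lemma cost_le v l k : parse v l k -> cost v l <= k.
Proof. apply cost_spec. Qed.

Lemma cost_nil v : cost v [] = 0.
Proof. pose proof (cost_le v [] 0 (parse_nil v)). lia. Qed.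

Lemma cost_cons_le v e l : cost v (e :: l) <= S (cost v l).
Proof. apply cost_le, parse_entry, cost_spec. Qed.

Lemma cost_block v l1 l2 : Forall2 dcos v l1 -> cost v (l1 ++ l2) <= length v - 1 + cost v l2.
Proof. intro H. apply cost_le, parse_block; auto. apply cost_spec. Qed.

Lemma cost_tail v e l : v <> [] -> cost v l <= cost v (e :: l).
Proof.
  intro Hv. destruct (cost_spec v (e :: l)) as [H _].
  inversion H as [|e0 l0 k0 H0|l1 l2 k0 Hm Hp]; subst.
  - pose proof (cost_le _ _ _ H0). lia.
  - destruct l1 as [|e1 l1']; [inversion Hm; subst; tauto|].
    injection H0 as -> El; subst l.
    apply Forall2_length in Hm. simpl in Hm.
    pose proof (cost_le _ _ _ (parse_entries v l1' l2 k0 Hp)). lia.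
Qed.

Lemma parse_dcos v l k : parse v l k -> forall l', Forall2 dcos l l' -> parse v l' k.
Proof.
  intro H. induction H; intros l' HR.
  - inversion HR; constructor.
  - inversion HR; subst. constructor; auto.
  - apply Forall2_app_inv_l in HR. destruct HR as [l1' [l2' [H1 [H2 ->]]]].
    constructor; eauto using Forall2_dcos_trans.
Qed.

Lemma cost_dcos v l l' : Forall2 dcos l l' -> cost v l = cost v l'.
Proof.
  intro H. apply Nat.le_antisymm; apply cost_le; eapply parse_dcos;
    eauto using Forall2_dcos_sym; apply cost_spec.
Qed.

Lemma cost_cons_nomatch v e l : v <> [] -> (forall s v', v = s :: v' -> ~ dcos s e) ->
  cost v (e :: l) = S (cost v l).
Proof.
  intros Hv Hn. apply Nat.le_antisymm; [apply cost_cons_le|].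
  destruct (cost_spec v (e :: l)) as [H _].
  inversion H as [|e0 l0 k0 H0|l1 l2 k0 Hm Hp]; subst.
  - pose proof (cost_le _ _ _ H0). lia.
  - destruct l1 as [|e1 l1']; [inversion Hm; subst; tauto|].
    injection H0 as -> El; subst l. inversion Hm; subst. exfalso. eapply Hn; eauto.
Qed.

Lemma parse_lower_bound v l k : parse v l k -> (length v - 1) * length l <= length v * k.
Proof.
  intro H. induction H; simpl.
  - lia.
  - destruct (length v) as [|m]; simpl in *; [lia|]. rewrite Nat.sub_0_r in *. nia.
  - apply Forall2_length in H. rewrite length_app, <- H.
    destruct (length v) as [|m]; simpl in *; [lia|]. rewrite Nat.sub_0_r in *. nia.
Qed.

Lemma parse_nomatch v l k : parse v l k ->
  (forall a b c, l = a ++ b ++ c -> ~ Forall2 dcos v b) -> k = length l.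
Proof.
  intro H. induction H; intro Hn; simpl; auto.
  - f_equal. apply IHparse. intros a b c ->. apply (Hn (e :: a) b c). auto.
  - exfalso. now apply (Hn [] l1 l2).
Qed.

Lemma cost_prepend v h l : cost v (prepend h l) <= S (cost v l).
Proof.
  unfold prepend. destruct (dec (C h)).
  - rewrite <- (cost_dcos v l) by now apply pushC_dcos. lia.
  - rewrite cost_cons_le, <- (cost_dcos v l) by apply pushC_dcos, C_cof. lia.
Qed.

Definition proper (s : G) : Prop := ~ C s /\ (A s \/ B s).

Fixpoint alternating (v : list G) : Prop :=
  match v with
  | s :: v' => match v' with [] => True | s' :: _ => (A s <-> ~ A s') end /\ alternating v'
  | [] => True
  end.

Definition ends_differ (v : list G) : Prop := A (hd gone v) <-> ~ A (last v gone).

Lemma proper_word u : Forall proper u -> is_word G A B u.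
Proof.
  intro H. induction H as [|s u [H1 H2] _ IH]; constructor; auto.
  split; auto. intros ->. apply H1, C1.
Qed.

Lemma pushC_app l1 : forall l2 c, C c ->
  exists c', C c' /\ pushC c (l1 ++ l2) = pushC c l1 ++ pushC c' l2.
Proof.
  induction l1 as [|e l1 IH]; intros l2 c Hc; simpl; [now exists c|].
  destruct (IH l2 _ (C_cof (c ** e))) as [c' [H1 ->]]. now exists c'.
Qed.

Definition discounted_length (v : list G) (g : G) : nat :=
  natmin (fun m => exists u, is_word G A B u /\ eval G u = g /\ m = length u - occ v u).

Lemma h_w_discounted w g :
  h_w G A B w g = (Z.of_nat (discounted_length (winv G w) g) - Z.of_nat (discounted_length w g))%Z.
Proof. unfold h_w, c_w, discounted_length. lia. Qed.

Lemma has_occ_length (v u : list G) k : v <> [] -> has_occ v u k -> k <= length u.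
Proof.
  intro Hv. revert u. induction k as [|k IH]; intros u H; simpl in *; [lia|].
  destruct H as [a [b [-> H]]]. specialize (IH b H).
  rewrite !length_app. destruct v; [tauto|]. simpl. lia.
Qed.

Lemma occ_spec (v u : list G) : v <> [] ->
  has_occ v u (occ v u) /\ forall k, has_occ v u k -> k <= occ v u.
Proof.
  intro Hv. apply natmax_spec; [now exists 0|].
  exists (length u). intros k Hk. eapply has_occ_length; eauto.
Qed.

Lemma has_occ_wpow (v : list G) n : has_occ v (wpow G v n) n.
Proof. induction n as [|n IH]; simpl; auto. now exists [], (wpow G v n). Qed.

Lemma discounted_length_le v u k : v <> [] -> is_word G A B u -> has_occ v u k ->
  discounted_length v (eval G u) <= length u - k.
Proof.
  intros Hv Hu Ho.
  destruct (natmin_spec (fun m => exists u', is_word G A B u' /\ eval G u' = eval G u /\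
    m = length u' - occ v u')) as [_ Hmin]; [now exists (length u - occ v u), u|].
  unfold discounted_length. eapply Nat.le_trans; [apply Hmin; now exists u|].
  destruct (occ_spec v u Hv) as [_ H]. specialize (H k Ho). lia.
Qed.

Section Image.
Variable F : G -> Sym.
Hypothesis HF : is_hom G Sym F.
Hypothesis HF_factor : forall P (HP : factor P) g, P g -> F g = factor_perm P HP g.

Definition image (g : G) (x : NF) : list G := proj1_sig (perm_fun (F g) x).

Lemma perm_fun_mul g h x : perm_fun (F (g ** h)) x = perm_fun (F g) (perm_fun (F h) x).
Proof. now rewrite HF. Qed.

Lemma image_factor P s x : factor P -> P s -> image s x = act P s (proj1_sig x).
Proof. intros HP Hs. unfold image. now rewrite (HF_factor P HP s Hs), (factor_perm_eq P HP s Hs). Qed.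

Lemma perm_fun_1 x : perm_fun (F gone) x = x.
Proof.
  apply NF_eq. fold (image gone x). rewrite (image_factor A) by (apply factorA || apply (group1 G A HA)).
  apply act_1; [apply factorA | apply proj2_sig].
Qed.

Lemma image_cons s u x : image (eval G (s :: u)) x = image s (perm_fun (F (eval G u)) x).
Proof. apply (f_equal (@proj1_sig _ _)), perm_fun_mul. Qed.

Lemma image_app u1 u2 x :
  image (eval G (u1 ++ u2)) x = image (eval G u1) (perm_fun (F (eval G u2)) x).
Proof. unfold image. now rewrite eval_app, perm_fun_mul. Qed.

Lemma image_single s x : image (eval G [s]) x = image s x.
Proof. rewrite image_cons. simpl. now rewrite perm_fun_1. Qed.

Lemma cost_image_letter v s x : v <> [] -> A s \/ B s ->
  cost v (image s x) <= S (cost v (proj1_sig x)).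
Proof.
  intros Hv Hs. destruct x as [l Hl]. simpl.
  destruct (factor_of s Hs) as [P [HP HPs]]. rewrite (image_factor P) by auto. simpl.
  destruct (act_decomp P l HP Hl) as [g0 [l0 [_ [_ [_ [El E]]]]]].
  rewrite E. eapply Nat.le_trans; [apply cost_prepend|].
  destruct El as [-> | [e ->]]; auto. pose proof (cost_tail v e l0 Hv). lia.
Qed.

Lemma cost_image_word v u x : v <> [] -> is_word G A B u ->
  cost v (image (eval G u) x) <= cost v (proj1_sig x) + length u.
Proof.
  intros Hv Hu. revert x. induction Hu as [|s u [Hs _] Hu IH]; intro x.
  - unfold image. simpl. rewrite perm_fun_1. lia.
  - rewrite image_cons. eapply Nat.le_trans; [apply cost_image_letter; auto|].
    specialize (IH x). unfold image in IH |- *. simpl. lia.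
Qed.

Lemma image_alternating v : forall s x, Forall proper (s :: v) -> alternating (s :: v) ->
  (forall P, factor P -> P (last (s :: v) gone) -> head_notin P (proj1_sig x)) ->
  exists l1 l2, image (eval G (s :: v)) x = l1 ++ l2 /\
    Forall2 dcos (s :: v) l1 /\ Forall2 dcos (proj1_sig x) l2.
Proof.
  induction v as [|s' v IH]; intros s x Hp Ha Hl.
  - inversion Hp as [|? ? [Hc Hs] _]; subst. rewrite image_single.
    destruct (factor_of s Hs) as [P [HP HPs]]. rewrite (image_factor P) by auto.
    rewrite act_head_notin by now apply Hl. unfold prepend. destruct (dec (C s)); [tauto|].
    exists [rep s], (pushC (cof s) (proj1_sig x)).
    split; auto. split; [constructor; auto using dcos_rep1 | apply pushC_dcos, C_cof].
  - inversion Hp as [|? ? [Hc Hs] Hp']; subst. destruct Ha as [Has Ha'].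
    destruct (IH s' x Hp' Ha') as [l1 [l2 [E [H1 H2]]]]; [auto|].
    inversion H1 as [|? e1 ? l1' He1 Hl1']; subst.
    assert (HP : exists P, factor P /\ P s /\ ~ P e1).
    { destruct (classic (A s)) as [h|h].
      - exists A. split; [apply factorA|]. split; auto.
        rewrite <- (dcos_factor_iff A _ _ factorA He1). tauto.
      - exists B. split; [apply factorB|]. split; [tauto|].
        inversion Hp' as [|? ? [Hc' Hs'] _]; subst.
        assert (A s') by (destruct (classic (A s')); tauto).
        intro Hb. apply Hc'. split; auto. now rewrite (dcos_factor_iff B _ _ factorB He1). }
    destruct HP as [P [HP [HPs He1']]].
    rewrite image_cons, (image_factor P) by auto. fold (image (eval G (s' :: v)) x). rewrite E.
    rewrite act_head_notin by (intros e m Em; now injection Em as -> _).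
    unfold prepend. destruct (dec (C s)); [tauto|].
    destruct (pushC_app (e1 :: l1') l2 _ (C_cof s)) as [c' [Hc' ->]].
    exists (rep s :: pushC (cof s) (e1 :: l1')), (pushC c' l2). split; auto. split.
    + constructor; [apply dcos_rep1|]. eapply Forall2_dcos_trans; [exact H1|].
      apply pushC_dcos, C_cof.
    + eapply Forall2_dcos_trans; [exact H2|]. now apply pushC_dcos.
Qed.

Lemma proper_same_factor P x y : factor P -> proper x -> proper y -> P x -> P y -> (A x <-> A y).
Proof. intros [-> | ->] [Hx Hx'] [Hy Hy'] HPx HPy; unfold C in *; tauto. Qed.

Lemma proper_A_iff x y : proper x -> proper y -> (A x <-> A y) -> exists P, factor P /\ P x /\ P y.
Proof.
  intros [_ Hx] [_ Hy] H. destruct (classic (A x)) as [h|h].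
  - exists A. split; [apply factorA | tauto].
  - exists B. split; [apply factorB | tauto].
Qed.

Lemma last_In {T} (l : list T) d : l <> [] -> In (last l d) l.
Proof.
  intro H. rewrite (app_removelast_last d H) at 2. apply in_or_app. right; now left.
Qed.

Lemma cost_image_merge v e l (Hl : reduced (e :: l)) :
  v <> [] -> Forall proper v -> ends_differ v -> (A e <-> A (last v gone)) ->
  cost v (image (eval G v) (exist _ (e :: l) Hl)) + 1 <= cost v (e :: l) + length v.
Proof.
  intros Hv Hp He Hsame. unfold ends_differ in He. set (sl := last v gone) in *.
  assert (Hpe : proper e) by (destruct Hl as [H1 [H2 _]]; split; auto).
  assert (Hpsl : proper sl) by (rewrite Forall_forall in Hp; apply Hp, last_In, Hv).
  destruct (proper_A_iff e sl Hpe Hpsl Hsame) as [P [HP [HPe HPsl]]].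
  pose proof (app_removelast_last gone Hv) as Ev. fold sl in Ev.
  set (v0 := removelast v) in *.
  assert (Hw0 : is_word G A B v0).
  { apply proper_word. rewrite Ev in Hp. apply Forall_app in Hp. tauto. }
  assert (Hlen : length v = length v0 + 1) by (rewrite Ev at 1; now rewrite length_app).
  assert (Hsl : cost v (image sl (exist _ (e :: l) Hl)) <= cost v (e :: l)).
  { rewrite (image_factor P) by auto. simpl. destruct (dec (P e)) as [_|h]; [|tauto].
    eapply Nat.le_trans; [apply cost_prepend|]. rewrite (cost_cons_nomatch v e l Hv); [lia|].
    intros s v' Es Hsd. replace (hd gone v) with s in He by now rewrite Es.
    rewrite (dcos_factor_iff A _ _ factorA Hsd) in He. tauto. }
  replace (eval G v) with (eval G (v0 ++ [sl])) by now rewrite <- Ev.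
  rewrite image_app.
  pose proof (cost_image_word v v0 (perm_fun (F (eval G [sl])) (exist _ (e :: l) Hl)) Hv Hw0).
  fold (image (eval G [sl]) (exist _ (e :: l) Hl)) in *. rewrite image_single in *. lia.
Qed.

Lemma cost_image_insert v x : v <> [] -> Forall proper v -> alternating v ->
  (forall P, factor P -> P (last v gone) -> head_notin P (proj1_sig x)) ->
  cost v (image (eval G v) x) + 1 <= cost v (proj1_sig x) + length v.
Proof.
  intros Hv Hp Ha Hn. destruct v as [|s v']; [tauto|].
  destruct (image_alternating v' s x Hp Ha Hn) as [l1 [l2 [-> [H1 H2]]]].
  pose proof (cost_block (s :: v') l1 l2 H1). rewrite <- (cost_dcos _ _ _ H2) in *. simpl in *. lia.
Qed.

Lemma cost_image_block v x : v <> [] -> Forall proper v -> alternating v -> ends_differ v ->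
  cost v (image (eval G v) x) + 1 <= cost v (proj1_sig x) + length v.
Proof.
  intros Hv Hp Ha He. destruct x as [l Hl].
  destruct (classic (exists e l0, l = e :: l0 /\ (A e <-> A (last v gone))))
    as [[e [l0 [-> Hsame]]] | Hdiff].
  - now apply cost_image_merge.
  - apply cost_image_insert; auto. intros P HP HPsl e l0 El HPe. simpl in El. subst l.
    apply Hdiff. exists e, l0. split; auto.
    apply (proper_same_factor P); auto.
    + destruct Hl as [H1 [H2 _]]; split; auto.
    + rewrite Forall_forall in Hp. apply Hp, last_In, Hv.
Qed.

Lemma cost_image_occurrences v : v <> [] -> Forall proper v -> alternating v -> ends_differ v ->
  forall k u x, is_word G A B u -> has_occ v u k ->
  cost v (image (eval G u) x) + k <= cost v (proj1_sig x) + length u.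
Proof.
  intros Hv Hp Ha He k. induction k as [|k IH]; intros u x Hu Ho.
  - pose proof (cost_image_word v u x Hv Hu). lia.
  - destruct Ho as [a [b [-> Hb]]].
    apply Forall_app in Hu. destruct Hu as [Hua Hu]. apply Forall_app in Hu. destruct Hu as [_ Hub].
    unfold image. rewrite !eval_app, !perm_fun_mul, !length_app.
    set (z := perm_fun (F (eval G b)) x). set (y := perm_fun (F (eval G v)) z).
    pose proof (cost_image_word v a y Hv Hua).
    pose proof (cost_image_block v z Hv Hp Ha He).
    pose proof (IH b x Hub Hb).
    unfold image in *. fold y in H0. fold z in H1. lia.
Qed.

Definition nf_empty : NF := exist _ [] I.

Lemma cost_le_discounted_length v g : v <> [] -> Forall proper v -> alternating v -> ends_differ v ->
  (exists u, is_word G A B u /\ eval G u = g) -> cost v (image g nf_empty) <= discounted_length v g.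
Proof.
  intros Hv Hp Ha He [u0 [Hu0 Eu0]].
  destruct (natmin_spec (fun m => exists u, is_word G A B u /\ eval G u = g /\
    m = length u - occ v u)) as [[u [Hu [<- Em]]] _]; [now exists (length u0 - occ v u0), u0|].
  unfold discounted_length. rewrite Em.
  destruct (occ_spec v u Hv) as [Ho _].
  pose proof (cost_image_occurrences v Hv Hp Ha He (occ v u) u nf_empty Hu Ho) as H.
  simpl in H. rewrite cost_nil in H. lia.
Qed.

End Image.

(** * The words [w_k] in the amalgam *)

Section Letters.
Variables p q b : G.
Hypothesis Hp : A p /\ ~ C p.
Hypothesis Hq : A q /\ ~ C q.
Hypothesis Hb : B b /\ ~ C b.

Definition letter_val (a : letter) : G :=
  match a with Lp => p | LP => ginv p | Lq => q | LQ => ginv q | Lb => b | LB => ginv b end.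

Definition is_A_letter (a : letter) : bool :=
  match a with Lp | LP | Lq | LQ => true | Lb | LB => false end.

Lemma proper_letter_val a : proper (letter_val a).
Proof.
  destruct Hp as [Hp1 Hp2], Hq as [Hq1 Hq2], Hb as [Hb1 Hb2].
  destruct a; simpl; split; try apply notC_inv; auto; [left | left | right]; now apply groupV.
Qed.

Lemma A_letter_val a : A (letter_val a) <-> is_A_letter a = true.
Proof.
  destruct Hp as [Hp1 Hp2], Hq as [Hq1 Hq2], Hb as [Hb1 Hb2].
  destruct a; simpl; split; intro; try discriminate; auto; try now apply groupV.
  - exfalso. apply Hb2. now split.
  - exfalso. apply Hb2. split; apply (groupVr G _ HA) || apply (groupVr G _ HB); auto.
    now apply groupV.
Qed.

Lemma Forall_proper_map u : Forall proper (map letter_val u).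
Proof.
  apply Forall_forall. intros x Hx. apply in_map_iff in Hx.
  destruct Hx as [a [<- _]]. apply proper_letter_val.
Qed.

Lemma is_word_map u : is_word G A B (map letter_val u).
Proof. apply proper_word, Forall_proper_map. Qed.

Lemma winv_map u : winv G (map letter_val u) = map letter_val (linv u).
Proof.
  unfold winv, linv. rewrite map_rev, !map_map. f_equal.
  apply map_ext. intro a. destruct a; simpl; auto; now rewrite invgK.
Qed.

Lemma wpow_map u n : wpow G (map letter_val u) n = map letter_val (lpow u n).
Proof. unfold wpow, lpow. now rewrite concat_map, map_repeat. Qed.

Lemma in_derived_wletters k : in_derived G (eval G (map letter_val (wletters k))).
Proof.
  unfold wletters. induction (bits k) as [|bit l IH]; simpl; [constructor|].
  rewrite map_app, eval_app. constructor; auto.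
  destruct bit; simpl map; rewrite commutator_word; constructor.
Qed.

Fixpoint alternates (t : bool) (u : list letter) : Prop :=
  match u with [] => True | a :: u' => is_A_letter a = t /\ alternates (negb t) u' end.

Lemma alternates_app u1 : forall t u2, alternates t u1 ->
  alternates (if Nat.even (length u1) then t else negb t) u2 -> alternates t (u1 ++ u2).
Proof.
  induction u1 as [|a u1 IH]; intros t u2 H1 H2; [exact H2|].
  change (length (a :: u1)) with (S (length u1)) in H2.
  destruct H1 as [Ha H1]. split; auto. apply IH; auto.
  rewrite Nat.even_succ, <- Nat.negb_even in H2.
  destruct (Nat.even (length u1)), t; simpl in *; auto.
Qed.

Lemma alternates_flat_map (f : bool -> list letter) t l :
  (forall x, alternates t (f x) /\ length (f x) = 4) -> alternates t (flat_map f l).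
Proof.
  intro H. induction l as [|x l IH]; simpl; auto.
  apply alternates_app; [apply H|]. destruct (H x) as [_ ->]. auto.
Qed.

Lemma alternates_lpow t u n :
  alternates t u -> Nat.even (length u) = true -> alternates t (lpow u n).
Proof.
  intros H He. induction n as [|n IH]; simpl; auto. apply alternates_app; auto. now rewrite He.
Qed.

Lemma alternates_wletters k : alternates true (wletters k).
Proof. apply alternates_flat_map. intros []; simpl; repeat split. Qed.

Lemma alternates_linv_wletters k : alternates false (linv (wletters k)).
Proof.
  unfold wletters. rewrite linv_flat_map. apply alternates_flat_map.
  intros []; simpl; repeat split.
Qed.

Lemma alternating_map t u : alternates t u -> alternating (map letter_val u).
Proof.
  revert t. induction u as [|a u IH]; intros t Hu; simpl; auto. destruct Hu as [Ha H].
  split; [|exact (IH _ H)].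
  destruct u as [|a' u']; simpl; auto. destruct H as [Ha' _].
  rewrite !A_letter_val, Ha, Ha'. destruct t; simpl; intuition discriminate.
Qed.

Lemma alternates_last t u : alternates t u -> u <> [] ->
  is_A_letter (last u Lb) = (if Nat.even (length u) then negb t else t).
Proof.
  revert t. induction u as [|a u IH]; intros t Hu Hn; [tauto|]. destruct Hu as [Ha H].
  destruct u as [|a' u']; [now simpl|].
  change (last (a :: a' :: u') Lb) with (last (a' :: u') Lb).
  rewrite (IH _ H) by discriminate.
  change (length (a :: a' :: u')) with (S (length (a' :: u'))).
  rewrite Nat.even_succ, <- Nat.negb_even.
  destruct (Nat.even (length (a' :: u'))), t; auto.
Qed.

Lemma last_map {T U} (f : T -> U) l d d' : l <> [] -> last (map f l) d' = f (last l d).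
Proof.
  induction l as [|a l IH]; intro H; [tauto|]. destruct l as [|a' l']; simpl; auto.
  apply IH. discriminate.
Qed.

Lemma ends_differ_map t u : alternates t u -> u <> [] -> Nat.even (length u) = true ->
  ends_differ (map letter_val u).
Proof.
  intros H Hn He. unfold ends_differ.
  rewrite (last_map letter_val u Lb) by auto.
  rewrite A_letter_val, (alternates_last t u H Hn), He.
  destruct u as [|a u']; [tauto|]. destruct H as [Ha _]. simpl hd.
  rewrite A_letter_val, Ha. destruct t; simpl; intuition discriminate.
Qed.

Section Values.
Variable F : G -> Sym.
Hypothesis HF : is_hom G Sym F.
Hypothesis HF_factor : forall P (HP : factor P) g, P g -> F g = factor_perm P HP g.

Lemma image_word_dcos t u : alternates t u ->
  Forall2 dcos (map letter_val u) (image F (eval G (map letter_val u)) nf_empty).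
Proof.
  intro Ha. pose proof (Forall_proper_map u) as Hpr. apply alternating_map in Ha.
  destruct (map letter_val u) as [|s v] eqn:E.
  - unfold image. simpl. rewrite perm_fun_1 by auto. constructor.
  - destruct (image_alternating F HF HF_factor v s nf_empty Hpr Ha) as [l1 [l2 [-> [H1 H2]]]].
    + intros P HP _ e l' El. discriminate.
    + inversion H2; subst. now rewrite app_nil_r.
Qed.

Lemma Forall2_nth {T U} (R : T -> U -> Prop) l l' d d' : Forall2 R l l' ->
  forall j, j < length l -> R (nth j l d) (nth j l' d').
Proof.
  intro H. induction H as [|x y l l' Hxy _ IH]; intros j Hj; simpl in *; [lia|].
  destruct j; auto. apply IH. lia.
Qed.

Variable col : letter -> nat.
Hypothesis col_dcos : forall a a', dcos (letter_val a) (letter_val a') -> col a = col a'.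

Lemma no_dcos_block V T l : Forall2 dcos (map letter_val T) l -> (forall o, ~ col_match col V T o) ->
  forall a m c, l = a ++ m ++ c -> ~ Forall2 dcos (map letter_val V) m.
Proof.
  intros HT Hno a m c -> Hm.
  apply Forall2_app_inv_r in HT. destruct HT as [Ta [Tmc [_ [H2 ET]]]].
  apply Forall2_app_inv_r in H2. destruct H2 as [Tm [Tc [H3 [_ ->]]]].
  assert (HVm : Forall2 dcos (map letter_val V) Tm)
    by (eapply Forall2_dcos_trans; [exact Hm | now apply Forall2_dcos_sym]).
  pose proof (Forall2_length HVm) as Hlen. rewrite length_map in Hlen.
  apply (Hno (length Ta)). split.
  - apply (f_equal (@length G)) in ET. rewrite length_map, !length_app in ET. lia.
  - intros j Hj. apply col_dcos.
    rewrite <- !map_nth with (f := letter_val) (d := Lb).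
    replace (nth (length Ta + j) (map letter_val T) (letter_val Lb)) with (nth j Tm (letter_val Lb)).
    + apply Forall2_nth; auto. now rewrite length_map.
    + rewrite ET, app_nth2, app_nth1 by lia. f_equal. lia.
Qed.

Lemma discounted_length_nomatch V T tV tT : alternates tV V -> V <> [] ->
  Nat.even (length V) = true -> alternates tT T -> (forall o, ~ col_match col V T o) ->
  discounted_length (map letter_val V) (eval G (map letter_val T)) = length T.
Proof.
  intros HaV HV He HaT Hno.
  assert (HV' : map letter_val V <> []) by (destruct V; simpl; [tauto | discriminate]).
  apply Nat.le_antisymm.
  - pose proof (discounted_length_le _ _ 0 HV' (is_word_map T) I). rewrite length_map in *. lia.
  - eapply Nat.le_trans; [|apply (cost_le_discounted_length F HF HF_factor)].
    + pose proof (image_word_dcos tT T HaT) as HT.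
      destruct (cost_spec (map letter_val V) (image F (eval G (map letter_val T)) nf_empty)) as [Hpa _].
      rewrite (parse_nomatch _ _ _ Hpa) by (eapply no_dcos_block; eauto).
      apply Forall2_length in HT. rewrite length_map in HT. lia.
    + auto.
    + apply Forall_proper_map.
    + eapply alternating_map; eauto.
    + eapply ends_differ_map; eauto.
    + exists (map letter_val T). split; auto using is_word_map.
Qed.

(** A power [u ^ n] parses with cost at least [(length u - 1) n]. *)
Lemma discounted_length_lpow u t n : alternates t u -> u <> [] -> Nat.even (length u) = true ->
  discounted_length (map letter_val u) (eval G (map letter_val (lpow u n))) = length (lpow u n) - n.
Proof.
  intros Ha Hu He.
  assert (Hu' : map letter_val u <> []) by (destruct u; simpl; [tauto | discriminate]).
  apply Nat.le_antisymm.
  - pose proof (discounted_length_le _ _ n Hu' (is_word_map (lpow u n))) as H.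
    rewrite length_map in H. apply H. rewrite <- wpow_map. apply has_occ_wpow.
  - eapply Nat.le_trans; [|apply (cost_le_discounted_length F HF HF_factor)].
    + pose proof (image_word_dcos t (lpow u n) (alternates_lpow t u n Ha He)) as HT.
      set (l := image F _ nf_empty) in *.
      destruct (cost_spec (map letter_val u) l) as [Hpa _].
      pose proof (parse_lower_bound _ _ _ Hpa) as Hl.
      apply Forall2_length in HT. rewrite length_map in *. rewrite <- HT, length_lpow in *.
      assert (length u > 0) by (destruct u; simpl; [tauto | lia]).
      assert (H4 : (length u - 1) * n <= cost (map letter_val u) l) by nia.
      nia.
    + auto.
    + apply Forall_proper_map.
    + eapply alternating_map; eauto.
    + eapply ends_differ_map; eauto.
    + exists (map letter_val (lpow u n)). split; auto using is_word_map.
Qed.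

Hypothesis col_Lp : col Lp = 0.
Hypothesis col_Lq : col Lq = 1.
Hypothesis col_Lb : col Lb = 2.
Hypothesis col_LB : col LB = 2.
Hypothesis col_LP_LQ : (col LP = 0 /\ col LQ = 1) \/ (col LP = 1 /\ col LQ = 0).

Let wk (k : nat) : list G := map letter_val (wletters k).

Lemma h_w_wletters_pow k n : 2 <= k -> h_w G A B (wk k) (eval G (wpow G (wk k) n)) = Z.of_nat n.
Proof.
  intro Hk. unfold wk. rewrite h_w_discounted, winv_map, wpow_map.
  rewrite (discounted_length_nomatch _ _ false true), (discounted_length_lpow _ true).
  - rewrite length_lpow, length_wletters. lia.
  - apply alternates_wletters.
  - apply wletters_nonempty.
  - apply even_length_wletters.
  - apply alternates_linv_wletters.
  - apply linv_wletters_nonempty.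
  - now rewrite length_linv, even_length_wletters.
  - apply alternates_lpow; [apply alternates_wletters | apply even_length_wletters].
  - intro o. eapply no_match_linv; eauto.
Qed.

Lemma h_w_wletters_longer k k' n : 2 <= k -> k < k' ->
  h_w G A B (wk k') (eval G (wpow G (wk k) n)) = 0%Z.
Proof.
  intros Hk Hkk. unfold wk. rewrite h_w_discounted, winv_map, wpow_map.
  assert (HT : alternates true (lpow (wletters k) n))
    by (apply alternates_lpow; [apply alternates_wletters | apply even_length_wletters]).
  rewrite (discounted_length_nomatch _ _ false true), (discounted_length_nomatch _ _ true true);
    auto using alternates_wletters, alternates_linv_wletters, wletters_nonempty, even_length_wletters.
  - lia.
  - intro o. eapply no_match_longer; eauto.
  - apply linv_wletters_nonempty.
  - now rewrite length_linv, even_length_wletters.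
  - intro o. eapply no_match_longer_linv; eauto.
Qed.

End Values.
End Letters.

Lemma exists_B_letter : at_least_2_left_cosets G B C -> exists b, B b /\ ~ C b.
Proof.
  intros [b1 [b2 [Hb1 [Hb2 Hn]]]]. exists (ginv b1 ** b2). split.
  - apply groupM; [auto | now apply groupV | auto].
  - intro Hc. apply Hn. exists (ginv b1 ** b2). split; auto. now rewrite mulKVg.
Qed.

(** Either [p] and [q] are the two sides of a double coset not closed under
    inversion, or they lie in two distinct double cosets closed under inversion. *)
Lemma exists_A_letters : at_least_3_double_cosets G C A ->
  exists p q, (A p /\ ~ C p) /\ (A q /\ ~ C q) /\ ~ dcos q p /\
    (dcos (ginv p) p <-> ~ dcos (ginv q) p).
Proof.
  intros [a1 [a2 [a3 [Ha1 [Ha2 [Ha3 [N12 [N13 N23]]]]]]]].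
  assert (Hxy : exists x y, (A x /\ ~ C x) /\ (A y /\ ~ C y) /\ ~ dcos x y).
  { destruct (classic (C a1)) as [C1|C1]; [exists a2, a3 | destruct (classic (C a2)) as [C2|C2]].
    - repeat split; auto; intro; [apply N12 | apply N13]; now apply dcos_C.
    - exists a1, a3. repeat split; auto. intro. apply N23. now apply dcos_C.
    - now exists a1, a2. }
  destruct Hxy as [x [y [Hx [Hy Nxy]]]].
  assert (Hinv : forall z, A z /\ ~ C z -> A (ginv z) /\ ~ C (ginv z))
    by (intros z [H1 H2]; split; [now apply groupV | now apply notC_inv]).
  destruct (classic (dcos (ginv x) x)) as [Sx|Sx]; [destruct (classic (dcos (ginv y) y)) as [Sy|Sy]|].
  - exists x, y. split; [auto|]. split; [auto|]. split.
    + intro. now apply Nxy, dcos_sym.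
    + split; [|auto]. intros _ Syx. apply Nxy, dcos_sym. eapply dcos_trans; eauto using dcos_sym.
  - exists y, (ginv y). rewrite invgK. split; [auto|]. split; [auto|]. split.
    + intro. now apply Sy.
    + split; [tauto | intro Hn; exfalso; apply Hn, dcos_refl].
  - exists x, (ginv x). rewrite invgK. split; [auto|]. split; [auto|]. split.
    + intro. now apply Sx.
    + split; [tauto | intro Hn; exfalso; apply Hn, dcos_refl].
Qed.

Lemma exists_colouring p q b : A p /\ ~ C p -> A q /\ ~ C q -> B b /\ ~ C b -> ~ dcos q p ->
  (dcos (ginv p) p <-> ~ dcos (ginv q) p) ->
  exists col : letter -> nat,
    (forall a a', dcos (letter_val p q b a) (letter_val p q b a') -> col a = col a') /\
    col Lp = 0 /\ col Lq = 1 /\ col Lb = 2 /\ col LB = 2 /\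
    ((col LP = 0 /\ col LQ = 1) \/ (col LP = 1 /\ col LQ = 0)).
Proof.
  intros Hp Hq Hb Hqp Hxor. set (val := letter_val p q b).
  exists (fun a => if is_A_letter a then if dec (dcos (val a) p) then 0 else 1 else 2).
  split; [|split; [|split; [|split; [|split]]]]; simpl.
  - intros a a' Hs.
    pose proof (dcos_factor_iff A _ _ factorA Hs) as HA_iff.
    unfold val in *. rewrite !A_letter_val in HA_iff by auto.
    destruct (is_A_letter a) eqn:Ea, (is_A_letter a') eqn:Ea'; try intuition discriminate.
    destruct (dec (dcos (letter_val p q b a) p)) as [h|h],
      (dec (dcos (letter_val p q b a') p)) as [h'|h']; auto; exfalso.
    + apply h'. eapply dcos_trans; eauto using dcos_sym.
    + apply h. eapply dcos_trans; eauto.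
  - destruct (dec (dcos p p)) as [|h]; [auto | exfalso; apply h, dcos_refl].
  - destruct (dec (dcos q p)); tauto.
  - reflexivity.
  - reflexivity.
  - destruct (dec (dcos (ginv p) p)), (dec (dcos (ginv q) p)); tauto.
Qed.

Lemma exists_words p q b : A p /\ ~ C p -> A q /\ ~ C q -> B b /\ ~ C b -> ~ dcos q p ->
  (dcos (ginv p) p <-> ~ dcos (ginv q) p) ->
  (exists F : G -> Sym, is_hom G Sym F /\
     forall P (HP : factor P) g, P g -> F g = factor_perm P HP g) ->
  exists w : nat -> list G,
    (forall i, is_word G A B (w i) /\ w i <> nil) /\
    (forall i n, h_w G A B (w i) (eval G (wpow G (w i) n)) = Z.of_nat n) /\
    (forall i j n, i < j -> h_w G A B (w j) (eval G (wpow G (w i) n)) = 0%Z) /\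
    (forall i, in_derived G (eval G (w i))).
Proof.
  intros Hp Hq Hb Hqp Hxor [F [HF HFf]].
  destruct (exists_colouring p q b Hp Hq Hb Hqp Hxor)
    as [col [Hcol [c_p [c_q [c_b [c_B c_PQ]]]]]].
  exists (fun i => map (letter_val p q b) (wletters (i + 2))).
  split; [|split; [|split]].
  - intro i. split; [now apply is_word_map|].
    intro E. apply map_eq_nil in E. revert E. apply wletters_nonempty.
  - intros i n. eapply h_w_wletters_pow; eauto. lia.
  - intros i j n Hij. eapply h_w_wletters_longer; eauto; lia.
  - intro i. apply in_derived_wletters.
Qed.

End Amalgam.

Theorem proposition2 (G : Group) (A B : G -> Prop) :
  is_amalgam G A B ->
  at_least_3_double_cosets G (fun x => A x /\ B x) A ->
  at_least_2_left_cosets G B (fun x => A x /\ B x) ->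
  exists w : nat -> list G,
    (forall i, is_word G A B (w i) /\ w i <> nil) /\
    (forall i n, 1 <= n ->
       h_w G A B (w i) (eval G (wpow G (w i) n)) = Z.of_nat n) /\
    (forall i j n, i < j -> 1 <= n ->
       h_w G A B (w j) (eval G (wpow G (w i) n)) = 0%Z) /\
    (forall i, in_derived G (eval G (w i))).
Proof.
  intros Ham H3 H2. pose proof Ham as [HA [HB _]].
  destruct (exists_A_letters G A B HA HB H3) as [p [q [Hp [Hq [Hqp Hxor]]]]].
  destruct (exists_B_letter G A B HB H2) as [b Hb].
  destruct (exists_words G A B HA HB p q b Hp Hq Hb Hqp Hxor (action_hom_exists G A B HA HB Ham))
    as [w [Hw [Hself [Hlonger Hder]]]].
  exists w. repeat split; auto; apply Hw.
Qed.
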